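(* Let $\mathcal{P}$, $\mathcal{Q}$ and $\mathcal{R}$ be orthogonal decompositions of the spaces $V_\Omega$, $V_{\Upsilon}$ and $V_{\Gamma}$, respectively, with $V_{\Upsilon} \leq V_\Omega$ and $V_{\Gamma} \leq V_\Omega$. If $\mathcal{Q}$ is structure balanced in relation to $\mathcal{P}$ with efficiency factors $\lambda_{\mathbf{PQ}}$, and $\mathcal{R}$ is structure balanced in relation to $\mathcal{P} \vartriangleright\mathcal{Q}$ with efficiency factors $\lambda_{\mathbf{P} \vartriangleright\mathbf{Q}, \mathbf{R}}$ and $\lambda_{\mathbf{P} \vdash\mathcal{Q}, \mathbf{R}}$, then: (a) $\mathcal{R}$ is structure balanced in relation to $\mathcal{P}$ with efficiency matrix $\Lambda_{\mathcal{PR}}$ whose entries are $\lambda_{\mathbf{P} \mathbf{R}} = \big( \lambda_{\mathbf{P} \vdash \mathcal{Q}, \mathbf{R}} + \sum_{\mathbf{Q} \in\mathcal{Q}}' \lambda_{\mathbf{P} \vartriangleright\mathbf{Q}, \mathbf{R}} \big)$; (b) the decomposition $(\mathcal{P} \vartriangleright\mathcal{Q}) \vartriangleright \mathcal{R}$ is \begin{eqnarray*} & & \{(\mathbf{P} \vartriangleright\mathbf{Q}) \vartriangleright\mathbf{R}\colon\mathbf{P} \in\mathcal{P}, \mathbf{Q} \in\mathcal{Q}, \mathbf{R} \in\mathcal{R}, \lambda_{\mathbf{PQ}} \neq0, \lambda_{\mathbf{P} \vartriangleright \mathbf{Q}, \mathbf{R}} \neq0 \} \\ &&\qquad{}\cup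 \{(\mathbf{P} \vartriangleright\mathbf{Q}) \vdash\mathcal{R}\colon\mathbf{P} \in\mathcal{P}, \mathbf{Q} \in\mathcal{Q}, \lambda_{\mathbf{PQ}} \neq0 \} \\ &&\qquad{}\cup \{(\mathbf{P} \vdash\mathcal{Q}) \vartriangleright\mathbf{R}\colon\mathbf{P} \in\mathcal{P}, \mathbf{R} \in\mathcal{R}, \lambda_{\mathbf{P} \vdash\mathcal{Q}, \mathbf{R}} \neq0 \} \\ &&\qquad{}\cup \{(\mathbf{P} \vdash\mathcal{Q}) \vdash\mathcal{R}\colon\mathbf{P} \in\mathcal{P} \}. \end{eqnarray*}
   Context: $\Omega$ is a finite set of observational units and $V_\Omega$ the space of real vectors indexed by $\Omega$; $\Upsilon$ and $\Gamma$ are further finite sets whose vector spaces are identified (via allocation functions $\Omega\to\Upsilon$, $\Omega\to\Gamma$) with subspaces $V_\Upsilon, V_\Gamma$ of $V_\Omega$. An orthogonal decomposition (structure) of a space is identified with the complete set of mutually orthogonal idempotent (projection) matrices onto its subspaces; all these are regarded as $\Omega\times\Omega$ matrices. For idempotents $\mathbf{P}$ and $\mathbf{Q}$, $\mathbf{Q}$ has first-order balance in relation to $\mathbf{P}$ if $\mathbf{QPQ}=\lambda_{\mathbf{PQ}}\mathbf{Q}$ for a scalar $\lambda_{\mathbf{PQ}}$ (the efficiency factor); if $\lambda_{\mathbf{PQ}}\neq 0$, $\mathbf{P}\vartriangleright\mathbf{Q}=\lambda_{\mathbf{PQ}}^{-1}\mathbf{PQP}$, the projector onto $\operatorname{Im}\mathbf{PQ}$.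 A structure $\mathcal{Q}$ is structure balanced in relation to a structure $\mathcal{P}$ if every element of $\mathcal{Q}$ has first-order balance in relation to every element of $\mathcal{P}$ and $\mathbf{Q}_1\mathbf{P}\mathbf{Q}_2=\mathbf{0}$ for all $\mathbf{P}\in\mathcal{P}$ and distinct $\mathbf{Q}_1,\mathbf{Q}_2\in\mathcal{Q}$. Then $\mathbf{P}\vdash\mathcal{Q}=\mathbf{P}-\sum'_{\mathbf{Q}\in\mathcal{Q}}\mathbf{P}\vartriangleright\mathbf{Q}$, where $\sum'_{\mathbf{Q}\in\mathcal{Q}}$ denotes summation over those $\mathbf{Q}$ with $\lambda_{\mathbf{PQ}}\neq0$; and the decomposition $\mathcal{P}\vartriangleright\mathcal{Q}$ of $V_\Omega$ consists of the (nonzero) idempotents $\mathbf{P}\vartriangleright\mathbf{Q}$ ($\lambda_{\mathbf{PQ}}\neq0$) and $\mathbf{P}\vdash\mathcal{Q}$ for $\mathbf{P}\in\mathcal{P}$, $\mathbf{Q}\in\mathcal{Q}$. The operations $\vartriangleright$ and $\vdash$ are applied in the same way to elements of $\mathcal{P}\vartriangleright\mathcal{Q}$ and $\mathcal{R}$; $\lambda_{\mathbf{P} \vartriangleright\mathbf{Q}, \mathbf{R}}$ and $\lambda_{\mathbf{P} \vdash\mathcal{Q}, \mathbf{R}}$ are the efficiency factors of $\mathbf{R}$ in relation to $\mathbf{P}\vartriangleright\mathbf{Q}$ and $\mathbf{P}\vdash\mathcal{Q}$. This is the setting of unrandomized-inclusive randomizations: $\Upsilon$ is randomized to $\Omega$,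 then $\Gamma$ is randomized to $\Omega$ taking account of the first randomization. *)

From HB Require Import structures.
From mathcomp Require Import all_boot all_order all_algebra.
Set Implicit Arguments. Unset Strict Implicit. Unset Printing Implicit Defensive.
Import Order.TTheory GRing.Theory Num.Theory.
Local Open Scope ring_scope.

Section Defs.
Variables (R : realFieldType) (n : nat).
Notation M := 'M[R]_n.

(* Matrix whose row space is V_Y, the subspace of V_Omega (Omega = 'I_n)
   of vectors constant on the fibres of the allocation function f. *)
Definition Vof (U : finType) (f : 'I_n -> U) : 'M[R]_(#|U|, n) :=
  \matrix_(u < #|U|, i < n) ((f i == enum_val u)%:R).

Definition is_decomp (Ps : seq M) (m : nat) (V : 'M[R]_(m, n)) : Prop :=
  [/\ uniq Ps,
      (forall P, P \in Ps -> [/\ P *m P = P, P^T = P & P != 0]),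
      (forall P1 P2, P1 \in Ps -> P2 \in Ps -> P1 != P2 -> P1 *m P2 = 0)
    & (\sum_(P <- Ps) P == V)%MS].

Definition fo_balance (P Q : M) : Prop := exists l : R, Q *m P *m Q = l *: Q.

(* Efficiency factor of Q in relation to P: the scalar l with QPQ = lQ
   (unique when Q is a nonzero projector and balance holds). *)
Definition eff (P Q : M) : R := \tr (Q *m P *m Q) / \tr Q.

Definition struct_bal (Qs Ps : seq M) : Prop :=
  (forall P Q, P \in Ps -> Q \in Qs -> fo_balance P Q) /\
  (forall P Q1 Q2, P \in Ps -> Q1 \in Qs -> Q2 \in Qs -> Q1 != Q2 ->
     Q1 *m P *m Q2 = 0).

Definition rhd (P Q : M) : M := (eff P Q)^-1 *: (P *m Q *m P).

Definition vdash (P : M) (Qs : seq M) : M :=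
  P - \sum_(Q <- Qs | eff P Q != 0) rhd P Q.

Definition decomp_rhd (Ps Qs : seq M) : seq M :=
  [seq X <- flatten [seq [seq rhd P Q | Q <- Qs & eff P Q != 0] | P <- Ps]
            ++ [seq vdash P Qs | P <- Ps] | X != 0].

End Defs.

From HB Require Import structures.
From mathcomp Require Import all_boot all_order all_algebra.
Set Implicit Arguments. Unset Strict Implicit. Unset Printing Implicit Defensive.
Import Order.TTheory GRing.Theory Num.Theory.
Local Open Scope ring_scope.

(* Writing P = (P |- Q) + \sum'_Q (P |> Q) as a sum of members of P |> Q (or
   zero), balance of R in relation to every member of P |> Q passes to P, and
   the efficiency factors add up because eff is linear in its first argument.
   Part (b) is bookkeeping: each member of P |> Q is a P |> Q or a P |- Q, and
   the zero matrices dropped from P |> Q would only contribute zeros, which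
   the outer decomposition drops anyway. *)

Lemma filter_flatten_map_filter (T : eqType) (p : pred T) (g : T -> seq T)
    (s : seq T) :
  (forall x, ~~ p x -> all (predC p) (g x)) ->
  [seq y <- flatten [seq g x | x <- s & p x] | p y] =
  [seq y <- flatten [seq g x | x <- s] | p y].
Proof.
move=> g_out; elim: s => //= x s IHs.
case: ifP => px /=; rewrite !filter_cat IHs //.
by move: (g_out x (negbT px)); rewrite all_predC has_filter negbK => /eqP ->.
Qed.

Lemma flatten_map_flatten (S T : Type) (g : S -> seq T) (ss : seq (seq S)) :
  flatten [seq g x | x <- flatten ss] = flatten [seq flatten (map g s) | s <- ss].
Proof. by elim: ss => //= s ss IHss; rewrite map_cat flatten_cat IHss. Qed.

Section Balance.
Variables (R : realFieldType) (n : nat).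
Notation M := 'M[R]_n.

Lemma mxtrace_proj_neq0 (A : M) : A *m A = A -> A^T = A -> A != 0 -> \tr A != 0.
Proof.
move=> AA AT; apply: contraNN => /eqP trA0; apply/eqP/matrixP => i j.
have trA_sq : \tr A = \sum_i \sum_j A i j ^+ 2.
  rewrite -{1}AA -{2}AT /mxtrace; apply: eq_bigr => k _.
  by rewrite mxE; apply: eq_bigr => l _; rewrite mxE expr2.
rewrite trA_sq in trA0.
have row0 : \sum_j A i j ^+ 2 = 0.
  by apply: (psumr_eq0P _ trA0) => // k _; apply/sumr_ge0 => l _; apply: sqr_ge0.
apply/eqP; rewrite mxE -sqrf_eq0; apply/eqP.
by apply: (psumr_eq0P _ row0) => // l _; apply: sqr_ge0.
Qed.

Lemma eff_balance (P Q : M) : Q *m Q = Q -> Q^T = Q -> Q != 0 ->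
  fo_balance P Q -> Q *m P *m Q = eff P Q *: Q.
Proof.
move=> QQ QT Q_neq0 [l QPQ].
by rewrite QPQ /eff QPQ mxtraceZ mulfK // mxtrace_proj_neq0.
Qed.

Lemma eff0 (Q : M) : eff 0 Q = 0.
Proof. by rewrite /eff mulmx0 mul0mx mxtrace0 mul0r. Qed.

Lemma effDl (P1 P2 Q : M) : eff (P1 + P2) Q = eff P1 Q + eff P2 Q.
Proof. by rewrite /eff mulmxDr mulmxDl mxtraceD mulrDl. Qed.

Lemma eff_suml (I : Type) (r : seq I) (p : pred I) (F : I -> M) (Q : M) :
  eff (\sum_(i <- r | p i) F i) Q = \sum_(i <- r | p i) eff (F i) Q.
Proof. exact: (big_morph (fun X => eff X Q) (fun X Y => effDl X Y Q) (eff0 Q)). Qed.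

Lemma rhd0 (Q : M) : rhd 0 Q = 0.
Proof. by rewrite /rhd !mul0mx scaler0. Qed.

Lemma vdash0 (Qs : seq M) : vdash 0 Qs = 0.
Proof. by rewrite /vdash big1 ?subr0 // => Q _; rewrite rhd0. Qed.

Lemma vdash_rhd_sum (P : M) (Qs : seq M) :
  P = vdash P Qs + \sum_(Q <- Qs | eff P Q != 0) rhd P Q.
Proof. by rewrite subrK. Qed.

Definition struct_bal1 (Rs : seq M) (X : M) : Prop :=
  (forall Rm, Rm \in Rs -> fo_balance X Rm) /\
  (forall R1 R2, R1 \in Rs -> R2 \in Rs -> R1 != R2 -> R1 *m X *m R2 = 0).

Variable Rs : seq M.

Lemma struct_balP (Xs : seq M) :
  struct_bal Rs Xs <-> forall X, X \in Xs -> struct_bal1 Rs X.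
Proof.
split=> [[bal orth] X Xin|bal1]; first by split=> *; [apply: bal | apply: orth].
by split=> [X Rm Xin|X R1 R2 Xin]; have [bal orth] := bal1 X Xin; auto.
Qed.

Lemma struct_bal10 : struct_bal1 Rs 0.
Proof.
by split=> [Rm _|R1 R2 _ _ _]; [exists 0 |]; rewrite mulmx0 mul0mx ?scale0r.
Qed.

Lemma struct_bal1D (X Y : M) :
  struct_bal1 Rs X -> struct_bal1 Rs Y -> struct_bal1 Rs (X + Y).
Proof.
move=> [balX orthX] [balY orthY]; split=> [Rm Rin|R1 R2 R1in R2in R12].
  have [[lX eX] [lY eY]] := (balX Rm Rin, balY Rm Rin).
  by exists (lX + lY); rewrite mulmxDr mulmxDl eX eY scalerDl.
by rewrite mulmxDr mulmxDl orthX ?orthY ?addr0.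
Qed.

Lemma struct_bal1_sum (I : eqType) (r : seq I) (p : pred I) (F : I -> M) :
  (forall i, i \in r -> p i -> struct_bal1 Rs (F i)) ->
  struct_bal1 Rs (\sum_(i <- r | p i) F i).
Proof.
move=> balF; rewrite big_seq_cond.
apply: (big_ind (struct_bal1 Rs)) => [|X Y|i /andP[]];
  [exact: struct_bal10 | exact: struct_bal1D | exact: balF].
Qed.

Lemma struct_bal1_nz_mem (Xs : seq M) (X : M) :
  struct_bal Rs Xs -> (X != 0 -> X \in Xs) -> struct_bal1 Rs X.
Proof.
move/struct_balP=> bal X_in; have [->|X_neq0] := eqVneq X 0.
  exact: struct_bal10.
exact/bal/X_in.
Qed.

Lemma struct_bal_decomp_rhd (Ps Qs : seq M) :
  struct_bal Rs (decomp_rhd Ps Qs) -> struct_bal Rs Ps.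
Proof.
move=> bal; apply/struct_balP => P Pin; rewrite (vdash_rhd_sum P Qs).
apply: struct_bal1D.
  apply: (struct_bal1_nz_mem bal) => nz.
  by rewrite mem_filter nz mem_cat; apply/orP; right; apply/mapP; exists P.
apply: struct_bal1_sum => Q Qin effPQ; apply: (struct_bal1_nz_mem bal) => nz.
rewrite mem_filter nz mem_cat; apply/orP; left.
by apply/flatten_mapP; exists P => //; rewrite map_f // mem_filter effPQ.
Qed.

Lemma eff_decomp_rhd (Ps Qs : seq M) (P Rm : M) :
  (forall Rm, Rm \in Rs -> [/\ Rm *m Rm = Rm, Rm^T = Rm & Rm != 0]) ->
  struct_bal Rs (decomp_rhd Ps Qs) -> P \in Ps -> Rm \in Rs ->
  Rm *m P *m Rm =
    (eff (vdash P Qs) Rm + \sum_(Q <- Qs | eff P Q != 0) eff (rhd P Q) Rm) *: Rm.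
Proof.
move=> Rproj /struct_bal_decomp_rhd[bal _] Pin Rin.
have [RR RT R_neq0] := Rproj Rm Rin.
rewrite (eff_balance RR RT R_neq0 (bal P Rm Pin Rin)).
by rewrite {1}(vdash_rhd_sum P Qs) effDl eff_suml.
Qed.

End Balance.

Section Decomposition.
Variables (R : realFieldType) (n : nat).
Notation M := 'M[R]_n.

Lemma decomp_rhd_decomp_rhd (Ps Qs Rs : seq M) :
  decomp_rhd (decomp_rhd Ps Qs) Rs =
  [seq X <-
       flatten [seq flatten [seq [seq rhd (rhd P Q) Rm
                                    | Rm <- Rs & eff (rhd P Q) Rm != 0]
                               | Q <- Qs & eff P Q != 0] | P <- Ps]
    ++ flatten [seq [seq rhd (vdash P Qs) Rm
                       | Rm <- Rs & eff (vdash P Qs) Rm != 0] | P <- Ps]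
    ++ flatten [seq [seq vdash (rhd P Q) Rs | Q <- Qs & eff P Q != 0]
                  | P <- Ps]
    ++ [seq vdash (vdash P Qs) Rs | P <- Ps]
     | X != 0].
Proof.
rewrite /decomp_rhd filter_cat -(flatten_map1 (fun X => vdash X Rs) [seq _ <- _ | _]).
rewrite !filter_flatten_map_filter.
- rewrite -!filter_cat !map_cat !flatten_cat -catA !flatten_map1.
  rewrite flatten_map_flatten map_flatten -!map_comp.
  congr [seq _ <- _ ++ _ ++ _ ++ _ | _]; congr flatten; apply: eq_map => P /=.
    by congr flatten; apply/esym/map_comp.
  exact/esym/map_comp.
- by move=> X /negPn/eqP ->; rewrite vdash0 /= eqxx.
- move=> X /negPn/eqP ->; apply/allP => Y /mapP[Rm _ ->].
  by rewrite rhd0 /= eqxx.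
Qed.

End Decomposition.

Theorem theorem1 (R : realFieldType) (n : nat) (U G : finType)
    (fU : 'I_n -> U) (fG : 'I_n -> G) (Ps Qs Rs : seq 'M[R]_n) :
  is_decomp Ps (1%:M : 'M[R]_n) ->
  is_decomp Qs (Vof R fU) ->
  is_decomp Rs (Vof R fG) ->
  struct_bal Qs Ps ->
  struct_bal Rs (decomp_rhd Ps Qs) ->
  (* (a) *)
  (struct_bal Rs Ps /\
   forall P Rm, P \in Ps -> Rm \in Rs ->
     Rm *m P *m Rm =
       (eff (vdash P Qs) Rm
        + \sum_(Q <- Qs | eff P Q != 0) eff (rhd P Q) Rm) *: Rm) /\
  (* (b) *)
  decomp_rhd (decomp_rhd Ps Qs) Rs =i
    [seq X <-
       flatten [seq flatten [seq [seq rhd (rhd P Q) Rm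
                                    | Rm <- Rs & eff (rhd P Q) Rm != 0]
                               | Q <- Qs & eff P Q != 0] | P <- Ps]
    ++ flatten [seq [seq vdash (rhd P Q) Rs | Q <- Qs & eff P Q != 0]
                  | P <- Ps]
    ++ flatten [seq [seq rhd (vdash P Qs) Rm
                       | Rm <- Rs & eff (vdash P Qs) Rm != 0] | P <- Ps]
    ++ [seq vdash (vdash P Qs) Rs | P <- Ps]
     | X != 0].
Proof.
move=> _ _ [_ Rproj _ _] _ bal; split.
  split; first exact: struct_bal_decomp_rhd bal.
  by move=> P Rm; apply: eff_decomp_rhd.
move=> Y; rewrite decomp_rhd_decomp_rhd !mem_filter !mem_cat.
by congr (_ && (_ || _)); rewrite orbCA.
Qed.
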